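(* Let $\mathcal C$ be a Markov category with conditionals and precise supports, $X$ an object and $o:I\to X$ a deterministic state. Then, as morphisms $X\leadsto X$ of $\mathrm{Obs}(\mathcal C)$, \[(X,\mathrm{copy}_X,o)\approx(X,o\otimes\mathrm{id}_X,o),\] where in both triples the second tensor factor of the codomain $X\otimes X$ is the condition object (and $o\otimes\mathrm{id}_X:X\cong I\otimes X\to X\otimes X$). In programming notation: $(x:= o);x\approx(x:=o);o$.
   Context: A Markov category is a symmetric monoidal category $(\mathcal C,\otimes,I)$ (assumed strict) in which every object $X$ carries a commutative comonoid $\mathrm{copy}_X$, $\mathrm{del}_X$ compatible with $\otimes$, and $I$ is terminal. A morphism $f$ is deterministic if $\mathrm{copy}_Y f=(f\otimes f)\mathrm{copy}_X$. $\langle f,g\rangle=(f\otimes g)\mathrm{copy}_A$; marginals $f_X=(\mathrm{id}_X\otimes\mathrm{del}_Y)f$, $f_Y=(\mathrm{del}_X\otimes\mathrm{id}_Y)f$. A conditional of $f:A\to X\otimes Y$ w.r.t. $X$ is $f|_X:X\otimes A\to Y$ with $f=(\mathrm{id}_X\otimes f|_X)(\mathrm{copy}_X\otimes\mathrm{id}_A)(f_X\otimes\mathrm{id}_A)\mathrm{copy}_A$ (symmetrically w.r.t. $Y$); $\mathcal C$ has conditionals if these always exist. $f=_\mu g$ means $\langle\mathrm{id},f\rangle\mu=\langle\mathrm{id},g\rangle\mu$; $\mu\ll\nu$ means $f=_\nu g\Rightarrow f=_\mu g$ for all $f,g$. Precise supports: for deterministic $x:I\to X$, $y:I\to Y$,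 any $f:X\to Y$, $\mu:I\to X$: $x\otimes y\ll\langle\mathrm{id}_X,f\rangle\mu$ iff ($x\ll\mu$ and $y\ll fx$). $\mathrm{Obs}(\mathcal C)$: same objects as $\mathcal C$; morphisms $X\leadsto Y$ are triples $(K,f,o)$, $f:X\to Y\otimes K$, $o:I\to K$ deterministic; composition $(K',f',o')\bullet(K,f,o)=(K'\otimes K,(f'\otimes\mathrm{id}_K)f,o'\otimes o)$; tensor of $(K,f,o):X\leadsto Y$, $(K',f',o'):X'\leadsto Y'$ is $(K'\otimes K,(\mathrm{id}_{Y'}\otimes\mathrm{swap}_{K',Y}\otimes\mathrm{id}_K)(f'\otimes f),o'\otimes o)$. For states $(K,\psi,o),(K',\psi',o'):I\leadsto X$, $(K,\psi,o)\sim(K',\psi',o')$ iff either ($o\ll\psi_K$, $o'\ll\psi'_{K'}$ and $\psi|_Ko=\psi'|_{K'}o'$, where $\psi|_K:K\to X$ is a conditional w.r.t. $K$) or ($o\not\ll\psi_K$ and $o'\not\ll\psi'_{K'}$). For $F,G:X\leadsto Y$, $F\approx G$ iff for every object $A$ and every state $\Psi:I\leadsto A\otimes X$, $(\mathrm{Id}_A\otimes F)\bullet\Psi\sim(\mathrm{Id}_A\otimes G)\bullet\Psi$. The conditioning effect $(:=o):X\leadsto I$ is $(X,\mathrm{id}_X,o)$. *)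

Set Implicit Arguments.

Record SMC : Type := {
  Ob : Type;
  Hom : Ob -> Ob -> Type;
  idm : forall A, Hom A A;
  comp : forall {A B C}, Hom B C -> Hom A B -> Hom A C;
  comp_idl : forall A B (f : Hom A B), comp (idm B) f = f;
  comp_idr : forall A B (f : Hom A B), comp f (idm A) = f;
  comp_assoc : forall A B C D (f : Hom A B) (g : Hom B C) (h : Hom C D),
      comp h (comp g f) = comp (comp h g) f;

  unit : Ob;
  ot : Ob -> Ob -> Ob;
  tens : forall {A B C D}, Hom A B -> Hom C D -> Hom (ot A C) (ot B D);
  tens_id : forall A B, tens (idm A) (idm B) = idm (ot A B);
  tens_comp : forall A B C A' B' C' (f : Hom A B) (g : Hom B C)
      (f' : Hom A' B') (g' : Hom B' C'),
      tens (comp g f) (comp g' f') = comp (tens g g') (tens f f');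

  assoc : forall A B C, Hom (ot (ot A B) C) (ot A (ot B C));
  assoc_inv : forall A B C, Hom (ot A (ot B C)) (ot (ot A B) C);
  assoc_iso1 : forall A B C, comp (assoc A B C) (assoc_inv A B C) = idm _;
  assoc_iso2 : forall A B C, comp (assoc_inv A B C) (assoc A B C) = idm _;
  assoc_nat : forall A A' B B' C C' (f : Hom A A') (g : Hom B B') (h : Hom C C'),
      comp (assoc A' B' C') (tens (tens f g) h)
      = comp (tens f (tens g h)) (assoc A B C);

  lunit : forall A, Hom (ot unit A) A;
  lunit_inv : forall A, Hom A (ot unit A);
  lunit_iso1 : forall A, comp (lunit A) (lunit_inv A) = idm A;
  lunit_iso2 : forall A, comp (lunit_inv A) (lunit A) = idm _;
  lunit_nat : forall A B (f : Hom A B),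
      comp (lunit B) (tens (idm unit) f) = comp f (lunit A);

  runit : forall A, Hom (ot A unit) A;
  runit_inv : forall A, Hom A (ot A unit);
  runit_iso1 : forall A, comp (runit A) (runit_inv A) = idm A;
  runit_iso2 : forall A, comp (runit_inv A) (runit A) = idm _;
  runit_nat : forall A B (f : Hom A B),
      comp (runit B) (tens f (idm unit)) = comp f (runit A);

  swap : forall A B, Hom (ot A B) (ot B A);
  swap_invol : forall A B, comp (swap B A) (swap A B) = idm _;
  swap_nat : forall A A' B B' (f : Hom A A') (g : Hom B B'),
      comp (swap A' B') (tens f g) = comp (tens g f) (swap A B);

  pentagon : forall A B C D,
      comp (assoc A B (ot C D)) (assoc (ot A B) C D)
      = comp (tens (idm A) (assoc B C D))
             (comp (assoc A (ot B C) D) (tens (assoc A B C) (idm D)));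
  triangle : forall A B,
      comp (tens (idm A) (lunit B)) (assoc A unit B) = tens (runit A) (idm B);
  hexagon : forall A B C,
      comp (assoc B C A) (comp (swap A (ot B C)) (assoc A B C))
      = comp (tens (idm B) (swap A C))
             (comp (assoc B A C) (tens (swap A B) (idm C)))
}.

Arguments Hom {s} _ _.
Arguments idm {s} A.
Arguments comp {s A B C} _ _.
Arguments unit {s}.
Arguments ot {s} _ _.
Arguments tens {s A B C D} _ _.
Arguments assoc {s} A B C.
Arguments assoc_inv {s} A B C.
Arguments lunit {s} A.
Arguments lunit_inv {s} A.
Arguments runit {s} A.
Arguments runit_inv {s} A.
Arguments swap {s} A B.

Declare Scope mc_scope.
Delimit Scope mc_scope with mc.
Open Scope mc_scope.
Notation "g ∘ f" := (comp g f) (at level 40, left associativity) : mc_scope.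
Notation "A ⊗ B" := (ot A B) (at level 35, right associativity) : mc_scope.
Notation "f ⊗⊗ g" := (tens f g) (at level 35, right associativity) : mc_scope.

Definition mid4 (C : SMC) (A B X D : Ob C) : Hom ((A ⊗ B) ⊗ (X ⊗ D)) ((A ⊗ X) ⊗ (B ⊗ D)) :=
  assoc_inv A X (B ⊗ D)
  ∘ (idm A ⊗⊗ assoc X B D)
  ∘ (idm A ⊗⊗ (swap B X ⊗⊗ idm D))
  ∘ (idm A ⊗⊗ assoc_inv B X D)
  ∘ assoc A B (X ⊗ D).

Arguments mid4 {C} A B X D.

Record MarkovCat : Type := {
  msmc :> SMC;
  copy : forall A : Ob msmc, Hom A (A ⊗ A);
  del : forall A : Ob msmc, Hom A unit;
  copy_counit_l : forall A, lunit A ∘ (del A ⊗⊗ idm A) ∘ copy A = idm A;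
  copy_counit_r : forall A, runit A ∘ (idm A ⊗⊗ del A) ∘ copy A = idm A;
  copy_coassoc : forall A,
      assoc A A A ∘ (copy A ⊗⊗ idm A) ∘ copy A = (idm A ⊗⊗ copy A) ∘ copy A;
  copy_comm : forall A, swap A A ∘ copy A = copy A;
  copy_tensor : forall A B,
      copy (A ⊗ B) = mid4 A A B B ∘ (copy A ⊗⊗ copy B);
  del_tensor : forall A B, del (A ⊗ B) = lunit unit ∘ (del A ⊗⊗ del B);
  copy_unit : copy unit = lunit_inv unit;
  del_unit : del unit = idm unit;
  unit_terminal : forall A (f : Hom A unit), f = del A
}.

Arguments copy {m} A.
Arguments del {m} A.

Section MarkovDefs.
Context {C : MarkovCat}.

Definition deterministic {X Y : Ob C} (f : Hom X Y) : Prop :=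
  copy Y ∘ f = (f ⊗⊗ f) ∘ copy X.

Definition pairing {A X Y : Ob C} (f : Hom A X) (g : Hom A Y) : Hom A (X ⊗ Y) :=
  (f ⊗⊗ g) ∘ copy A.

Definition marg1 {A X Y : Ob C} (f : Hom A (X ⊗ Y)) : Hom A X :=
  runit X ∘ (idm X ⊗⊗ del Y) ∘ f.
Definition marg2 {A X Y : Ob C} (f : Hom A (X ⊗ Y)) : Hom A Y :=
  lunit Y ∘ (del X ⊗⊗ idm Y) ∘ f.

(* g : X ⊗ A -> Y is a conditional of f : A -> X ⊗ Y w.r.t. X *)
Definition is_cond1 {A X Y : Ob C} (f : Hom A (X ⊗ Y)) (g : Hom (X ⊗ A) Y) : Prop :=
  f = (idm X ⊗⊗ g) ∘ assoc X X A ∘ (copy X ⊗⊗ idm A)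
      ∘ (marg1 f ⊗⊗ idm A) ∘ copy A.

(* g : Y ⊗ A -> X is a conditional of f : A -> X ⊗ Y w.r.t. Y *)
Definition is_cond2 {A X Y : Ob C} (f : Hom A (X ⊗ Y)) (g : Hom (Y ⊗ A) X) : Prop :=
  f = (g ⊗⊗ idm Y) ∘ swap Y (Y ⊗ A) ∘ assoc Y Y A ∘ (copy Y ⊗⊗ idm A)
      ∘ (marg2 f ⊗⊗ idm A) ∘ copy A.

Definition has_conditionals : Prop :=
  forall (A X Y : Ob C) (f : Hom A (X ⊗ Y)),
    (exists g, is_cond1 f g) /\ (exists g, is_cond2 f g).

Definition as_eq {X Y : Ob C} (mu : Hom unit X) (f g : Hom X Y) : Prop :=
  pairing (idm X) f ∘ mu = pairing (idm X) g ∘ mu.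

Definition abs_cont {X : Ob C} (mu nu : Hom unit X) : Prop :=
  forall (Y : Ob C) (f g : Hom X Y), as_eq nu f g -> as_eq mu f g.

Definition tens_st {X Y : Ob C} (x : Hom unit X) (y : Hom unit Y) : Hom unit (X ⊗ Y) :=
  (x ⊗⊗ y) ∘ lunit_inv unit.

Definition precise_supports : Prop :=
  forall (X Y : Ob C) (x : Hom unit X) (y : Hom unit Y) (f : Hom X Y) (mu : Hom unit X),
    deterministic x -> deterministic y ->
    (abs_cont (tens_st x y) (pairing (idm X) f ∘ mu)
     <-> (abs_cont x mu /\ abs_cont y (f ∘ x))).

(* A morphism X ~> Y of Obs(C): (K, f : X -> Y ⊗ K, o : I -> K).
   Determinism of o is imposed separately where needed. *)
Record ObsHom (X Y : Ob C) : Type := mkObs {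
  obsK : Ob C;
  obsF : Hom X (Y ⊗ obsK);
  obsO : Hom unit obsK
}.

Arguments mkObs {X Y} _ _ _.

Definition obs_comp {X Y Z : Ob C} (G : ObsHom Y Z) (F : ObsHom X Y) : ObsHom X Z :=
  mkObs (obsK G ⊗ obsK F)
        (assoc Z (obsK G) (obsK F) ∘ (obsF G ⊗⊗ idm (obsK F)) ∘ obsF F)
        (tens_st (obsO G) (obsO F)).

Definition obs_tens {X' Y' X Y : Ob C} (F' : ObsHom X' Y') (F : ObsHom X Y)
  : ObsHom (X' ⊗ X) (Y' ⊗ Y) :=
  mkObs (obsK F' ⊗ obsK F)
        (mid4 Y' (obsK F') Y (obsK F) ∘ (obsF F' ⊗⊗ obsF F))
        (tens_st (obsO F') (obsO F)).

Definition obs_id (A : Ob C) : ObsHom A A :=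
  mkObs unit (runit_inv A) (idm unit).

(* equivalence of states (K,psi,o) ~ (K',psi',o') : I ~> X.
   psi|_K : K ⊗ I -> X is a conditional w.r.t. K; "psi|_K o" is
   psi|_K ∘ ρ^{-1}_K ∘ o. *)
Definition state_equiv {X : Ob C} (P Q : ObsHom unit X) : Prop :=
  (abs_cont (obsO P) (marg2 (obsF P)) /\ abs_cont (obsO Q) (marg2 (obsF Q)) /\
   forall (cP : Hom (obsK P ⊗ unit) X) (cQ : Hom (obsK Q ⊗ unit) X),
     is_cond2 (obsF P) cP -> is_cond2 (obsF Q) cQ ->
     cP ∘ runit_inv (obsK P) ∘ obsO P = cQ ∘ runit_inv (obsK Q) ∘ obsO Q)
  \/
  (~ abs_cont (obsO P) (marg2 (obsF P)) /\ ~ abs_cont (obsO Q) (marg2 (obsF Q))).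

(* observational equivalence F ≈ G of morphisms X ~> Y of Obs(C):
   states Psi of Obs(C) have a deterministic observation o. *)
Definition obs_equiv {X Y : Ob C} (F G : ObsHom X Y) : Prop :=
  forall (A : Ob C) (Psi : ObsHom unit (A ⊗ X)),
    deterministic (obsO Psi) ->
    state_equiv (obs_comp (obs_tens (obs_id A) F) Psi)
                (obs_comp (obs_tens (obs_id A) G) Psi).

End MarkovDefs.


Arguments has_conditionals C : clear implicits.
Arguments precise_supports C : clear implicits.
Arguments mkObs {C X Y} _ _ _.

From Stdlib Require Import Classical Setoid.

(* Tensoring with Id_A and composing with a state Psi, the two morphisms give
   states of Obs(C) that differ only by post-processing their output with
   id_A ⊗ (o ∘ del): the copied X-output is resampled from o.  Such
   post-processing leaves the marginal on the condition object unchanged, so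
   either both observations are impossible or both are possible, and it maps
   conditionals to conditionals, which are unique almost surely.  In the first
   state the X-output is almost surely the X-component of the condition, and
   that component of the observation is o; hence every posterior has
   deterministic X-marginal o and is unchanged by resampling it. *)

(* Composites are kept right-associated (tactic [reassoc]); the [_k] variant of
   an equation [p = q] is [p ∘ k = q ∘ k] with both sides right-associated, the
   form in which it can be rewritten inside such composites. *)

Section TensorCalculus.
Context {C : SMC}.

Lemma comp_eq_precomp {A B : Ob C} (p q : Hom A B) :
  p = q -> forall Z (k : Hom Z A), p ∘ k = q ∘ k.
Proof. now intros ->. Qed.

Lemma tens_comp_fold {A B D A' B' D' : Ob C}
    (f : Hom A B) (g : Hom B D) (f' : Hom A' B') (g' : Hom B' D') :
  (g ⊗⊗ g') ∘ (f ⊗⊗ f') = (g ∘ f) ⊗⊗ (g' ∘ f').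
Proof. now rewrite tens_comp. Qed.

Lemma tens_comp_fold_k {A B D A' B' D' Z : Ob C}
    (f : Hom A B) (g : Hom B D) (f' : Hom A' B') (g' : Hom B' D') (k : Hom Z _) :
  (g ⊗⊗ g') ∘ ((f ⊗⊗ f') ∘ k) = (g ∘ f) ⊗⊗ (g' ∘ f') ∘ k.
Proof. now rewrite comp_assoc, tens_comp_fold. Qed.

Lemma assoc_iso1_k (A B D Z : Ob C) (k : Hom Z _) : assoc A B D ∘ (assoc_inv A B D ∘ k) = k.
Proof. now rewrite comp_assoc, assoc_iso1, comp_idl. Qed.
Lemma assoc_iso2_k (A B D Z : Ob C) (k : Hom Z _) : assoc_inv A B D ∘ (assoc A B D ∘ k) = k.
Proof. now rewrite comp_assoc, assoc_iso2, comp_idl. Qed.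
Lemma lunit_iso1_k (A Z : Ob C) (k : Hom Z _) : lunit A ∘ (lunit_inv A ∘ k) = k.
Proof. now rewrite comp_assoc, lunit_iso1, comp_idl. Qed.
Lemma lunit_iso2_k (A Z : Ob C) (k : Hom Z _) : lunit_inv A ∘ (lunit A ∘ k) = k.
Proof. now rewrite comp_assoc, lunit_iso2, comp_idl. Qed.
Lemma runit_iso1_k (A Z : Ob C) (k : Hom Z _) : runit A ∘ (runit_inv A ∘ k) = k.
Proof. now rewrite comp_assoc, runit_iso1, comp_idl. Qed.
Lemma runit_iso2_k (A Z : Ob C) (k : Hom Z _) : runit_inv A ∘ (runit A ∘ k) = k.
Proof. now rewrite comp_assoc, runit_iso2, comp_idl. Qed.
Lemma swap_invol_k (A B Z : Ob C) (k : Hom Z _) : swap B A ∘ (swap A B ∘ k) = k.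
Proof. now rewrite comp_assoc, swap_invol, comp_idl. Qed.

End TensorCalculus.

Ltac reassoc := repeat rewrite <- comp_assoc; rewrite ?comp_idl, ?comp_idr.

Ltac merge_tens :=
  reassoc; repeat (rewrite tens_comp_fold_k || rewrite tens_comp_fold);
  rewrite ?tens_id; reassoc; rewrite ?tens_id, ?comp_idl, ?comp_idr.

Ltac cancel_isos :=
  repeat first
    [ rewrite assoc_iso1 | rewrite assoc_iso2 | rewrite lunit_iso1 | rewrite lunit_iso2
    | rewrite runit_iso1 | rewrite runit_iso2 | rewrite swap_invol
    | rewrite assoc_iso1_k | rewrite assoc_iso2_k | rewrite lunit_iso1_k
    | rewrite lunit_iso2_k | rewrite runit_iso1_k | rewrite runit_iso2_k
    | rewrite swap_invol_k | rewrite comp_idl | rewrite comp_idr | rewrite tens_id ].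

(* Rewrites with [H : p = q] where [p] occurs as a prefix of a right-associated composite. *)
Ltac rewrite_k H :=
  first
    [ rewrite H
    | let H' := fresh in
      pose proof (comp_eq_precomp _ _ H) as H';
      repeat setoid_rewrite <- comp_assoc in H';
      repeat setoid_rewrite comp_idl in H';
      rewrite H'; clear H' ].

Section Coherence.
Context {C : SMC}.
Notation I := (@unit C).

Lemma assoc_inv_nat {A A' B B' D D' : Ob C} (f : Hom A A') (g : Hom B B') (h : Hom D D') :
  assoc_inv A' B' D' ∘ (f ⊗⊗ (g ⊗⊗ h)) = ((f ⊗⊗ g) ⊗⊗ h) ∘ assoc_inv A B D.
Proof.
  transitivity (assoc_inv A' B' D' ∘ ((f ⊗⊗ (g ⊗⊗ h)) ∘ (assoc A B D ∘ assoc_inv A B D))).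
  { now rewrite assoc_iso1, comp_idr. }
  rewrite (comp_assoc _ _ _ _ _ _ _ (f ⊗⊗ _)), <- assoc_nat. reassoc. now rewrite assoc_iso2_k.
Qed.

Lemma runit_inv_nat {A B : Ob C} (f : Hom A B) : (f ⊗⊗ idm I) ∘ runit_inv A = runit_inv B ∘ f.
Proof.
  transitivity ((runit_inv B ∘ runit B) ∘ ((f ⊗⊗ idm I) ∘ runit_inv A)).
  { now rewrite runit_iso2, comp_idl. }
  reassoc. rewrite (comp_assoc _ _ _ _ _ _ _ (runit B)), runit_nat. reassoc.
  now rewrite runit_iso1, comp_idr.
Qed.

Lemma assoc_nat_k {A A' B B' D D' Z : Ob C} (f : Hom A A') (g : Hom B B') (h : Hom D D')
    (k : Hom Z _) :
  assoc A' B' D' ∘ (((f ⊗⊗ g) ⊗⊗ h) ∘ k) = (f ⊗⊗ (g ⊗⊗ h)) ∘ (assoc A B D ∘ k).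
Proof. now rewrite !comp_assoc, assoc_nat. Qed.
Lemma assoc_inv_nat_k {A A' B B' D D' Z : Ob C} (f : Hom A A') (g : Hom B B') (h : Hom D D')
    (k : Hom Z _) :
  assoc_inv A' B' D' ∘ ((f ⊗⊗ (g ⊗⊗ h)) ∘ k) = ((f ⊗⊗ g) ⊗⊗ h) ∘ (assoc_inv A B D ∘ k).
Proof. now rewrite !comp_assoc, assoc_inv_nat. Qed.
Lemma lunit_nat_k {A B Z : Ob C} (f : Hom A B) (k : Hom Z _) :
  lunit B ∘ ((idm I ⊗⊗ f) ∘ k) = f ∘ (lunit A ∘ k).
Proof. now rewrite !comp_assoc, lunit_nat. Qed.
Lemma runit_nat_k {A B Z : Ob C} (f : Hom A B) (k : Hom Z _) :
  runit B ∘ ((f ⊗⊗ idm I) ∘ k) = f ∘ (runit A ∘ k).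
Proof. now rewrite !comp_assoc, runit_nat. Qed.
Lemma runit_inv_nat_k {A B Z : Ob C} (f : Hom A B) (k : Hom Z _) :
  (f ⊗⊗ idm I) ∘ (runit_inv A ∘ k) = runit_inv B ∘ (f ∘ k).
Proof. now rewrite !comp_assoc, runit_inv_nat. Qed.
Lemma swap_nat_k {A A' B B' Z : Ob C} (f : Hom A A') (g : Hom B B') (k : Hom Z _) :
  swap A' B' ∘ ((f ⊗⊗ g) ∘ k) = (g ⊗⊗ f) ∘ (swap A B ∘ k).
Proof. now rewrite !comp_assoc, swap_nat. Qed.

Lemma tens_split_r {A B A' B' : Ob C} (f : Hom A B) (g : Hom A' B') :
  f ⊗⊗ g = (idm B ⊗⊗ g) ∘ (f ⊗⊗ idm A').
Proof. now rewrite tens_comp_fold, comp_idl, comp_idr. Qed.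

Lemma tens_unit_r_inj {A B : Ob C} (f g : Hom A B) : f ⊗⊗ idm I = g ⊗⊗ idm I -> f = g.
Proof.
  intro E. transitivity (runit B ∘ ((f ⊗⊗ idm I) ∘ runit_inv A)).
  - rewrite runit_nat_k. now cancel_isos.
  - rewrite E, runit_nat_k. now cancel_isos.
Qed.

Lemma tens_unit_l_inj {A B : Ob C} (f g : Hom A B) : idm I ⊗⊗ f = idm I ⊗⊗ g -> f = g.
Proof.
  intro E. transitivity (lunit B ∘ ((idm I ⊗⊗ f) ∘ lunit_inv A)).
  - rewrite lunit_nat_k. now cancel_isos.
  - rewrite E, lunit_nat_k. now cancel_isos.
Qed.

(* Kelly's unit coherences, derived from the pentagon and the triangle. *)
Lemma runit_tens (A B : Ob C) : runit (A ⊗ B) = (idm A ⊗⊗ runit B) ∘ assoc A B I.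
Proof.
  apply tens_unit_r_inj.
  assert (E : assoc A B I ∘ (runit (A ⊗ B) ⊗⊗ idm I)
              = assoc A B I ∘ (((idm A ⊗⊗ runit B) ∘ assoc A B I) ⊗⊗ idm I)).
  { rewrite <- (triangle _ (A ⊗ B) I), <- (tens_id _ A B).
    rewrite comp_assoc, assoc_nat. reassoc. rewrite pentagon. reassoc.
    rewrite tens_comp_fold_k, triangle, comp_idl, <- assoc_nat_k. now merge_tens. }
  transitivity (assoc_inv A B I ∘ (assoc A B I ∘ (runit (A ⊗ B) ⊗⊗ idm I))).
  { now cancel_isos. }
  rewrite E. now cancel_isos.
Qed.

Lemma lunit_tens (A B : Ob C) : lunit (A ⊗ B) ∘ assoc I A B = lunit A ⊗⊗ idm B.
Proof.
  apply tens_unit_l_inj.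
  set (a := assoc I (I ⊗ A) B ∘ (assoc I I A ⊗⊗ idm B)).
  assert (E : (idm I ⊗⊗ lunit (A ⊗ B)) ∘ ((idm I ⊗⊗ assoc I A B) ∘ a)
              = (idm I ⊗⊗ (lunit A ⊗⊗ idm B)) ∘ a).
  { unfold a. rewrite <- pentagon, comp_assoc, triangle, <- (tens_id _ A B), <- assoc_nat,
      <- (triangle _ I A), <- assoc_nat_k, tens_comp_fold, comp_idl.
    reflexivity. }
  assert (a_epi : forall Z (f g : Hom (I ⊗ ((I ⊗ A) ⊗ B)) Z), f ∘ a = g ∘ a -> f = g).
  { intros Z f g H.
    transitivity (f ∘ a ∘ ((assoc_inv I I A ⊗⊗ idm B) ∘ assoc_inv I (I ⊗ A) B));
      [| rewrite H]; unfold a; reassoc; rewrite tens_comp_fold_k; now cancel_isos. }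
  apply a_epi. rewrite <- E. reassoc. now rewrite tens_comp_fold_k, comp_idl.
Qed.

Lemma assoc_runit_inv (A B : Ob C) : assoc A B I ∘ runit_inv (A ⊗ B) = idm A ⊗⊗ runit_inv B.
Proof.
  transitivity ((idm A ⊗⊗ runit_inv B) ∘ ((idm A ⊗⊗ runit B) ∘ assoc A B I) ∘ runit_inv (A ⊗ B)).
  - reassoc. rewrite tens_comp_fold_k. now cancel_isos.
  - rewrite <- runit_tens. reassoc. now cancel_isos.
Qed.

Lemma assoc_inv_runit_inv (A B : Ob C) :
  assoc_inv A B I ∘ (idm A ⊗⊗ runit_inv B) = runit_inv (A ⊗ B).
Proof. rewrite <- assoc_runit_inv. reassoc. now cancel_isos. Qed.

Lemma assoc_inv_lunit (A B : Ob C) : assoc_inv I A B = (lunit_inv A ⊗⊗ idm B) ∘ lunit (A ⊗ B).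
Proof.
  transitivity ((lunit_inv A ⊗⊗ idm B) ∘ (lunit A ⊗⊗ idm B) ∘ assoc_inv I A B).
  - rewrite tens_comp_fold. now cancel_isos.
  - rewrite <- lunit_tens. reassoc. now cancel_isos.
Qed.

Lemma triangle_inv (A B : Ob C) :
  assoc A I B ∘ (runit_inv A ⊗⊗ idm B) = idm A ⊗⊗ lunit_inv B.
Proof.
  transitivity ((idm A ⊗⊗ lunit_inv B) ∘ ((idm A ⊗⊗ lunit B) ∘ assoc A I B)
                  ∘ (runit_inv A ⊗⊗ idm B)).
  - reassoc. rewrite tens_comp_fold_k. now cancel_isos.
  - rewrite triangle. reassoc. rewrite tens_comp_fold. now cancel_isos.
Qed.

Lemma mid4_nat {A B X D A' B' X' D' : Ob C}
    (f1 : Hom A A') (f2 : Hom B B') (f3 : Hom X X') (f4 : Hom D D') :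
  mid4 A' B' X' D' ∘ ((f1 ⊗⊗ f2) ⊗⊗ (f3 ⊗⊗ f4)) = ((f1 ⊗⊗ f3) ⊗⊗ (f2 ⊗⊗ f4)) ∘ mid4 A B X D.
Proof.
  unfold mid4.
  transitivity (assoc_inv A' X' (B' ⊗ D')
    ∘ ((f1 ⊗⊗ (assoc X' B' D' ∘ (swap B' X' ⊗⊗ idm D') ∘ assoc_inv B' X' D'
                 ∘ (f2 ⊗⊗ (f3 ⊗⊗ f4)))) ∘ assoc A B (X ⊗ D))).
  { reassoc. rewrite assoc_nat. now merge_tens. }
  transitivity (assoc_inv A' X' (B' ⊗ D')
    ∘ ((f1 ⊗⊗ ((f3 ⊗⊗ (f2 ⊗⊗ f4)) ∘ assoc X B D ∘ (swap B X ⊗⊗ idm D) ∘ assoc_inv B X D))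
       ∘ assoc A B (X ⊗ D))).
  { do 3 f_equal. reassoc.
    rewrite assoc_inv_nat, tens_comp_fold_k, swap_nat, comp_idl, <- assoc_nat_k,
      tens_comp_fold_k, comp_idr.
    reflexivity. }
  reassoc. rewrite <- assoc_inv_nat_k. now merge_tens.
Qed.

Lemma mid4_nat_k {A B X D A' B' X' D' Z : Ob C}
    (f1 : Hom A A') (f2 : Hom B B') (f3 : Hom X X') (f4 : Hom D D') (k : Hom Z _) :
  mid4 A' B' X' D' ∘ (((f1 ⊗⊗ f2) ⊗⊗ (f3 ⊗⊗ f4)) ∘ k)
  = ((f1 ⊗⊗ f3) ⊗⊗ (f2 ⊗⊗ f4)) ∘ (mid4 A B X D ∘ k).
Proof. now rewrite !comp_assoc, mid4_nat. Qed.

Definition exch (B X K : Ob C) : Hom ((B ⊗ X) ⊗ K) ((B ⊗ K) ⊗ X) :=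
  assoc_inv B K X ∘ (idm B ⊗⊗ swap X K) ∘ assoc B X K.

Lemma exch_nat {B K X X' Z : Ob C} (p : Hom X X') (k : Hom Z _) :
  (idm (B ⊗ K) ⊗⊗ p) ∘ (exch B X K ∘ k) = exch B X' K ∘ (((idm B ⊗⊗ p) ⊗⊗ idm K) ∘ k).
Proof.
  unfold exch. reassoc. rewrite <- (tens_id _ B K), <- assoc_inv_nat_k, assoc_nat_k.
  merge_tens. now rewrite <- swap_nat.
Qed.

Lemma hexagon_exch (X B K Z : Ob C) (k : Hom Z _) :
  swap X (B ⊗ K) ∘ (assoc X B K ∘ ((swap B X ⊗⊗ idm K) ∘ k)) = exch B X K ∘ k.
Proof.
  unfold exch.
  transitivity (assoc_inv B K X ∘ ((assoc B K X ∘ (swap X (B ⊗ K) ∘ assoc X B K))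
                                    ∘ ((swap B X ⊗⊗ idm K) ∘ k))).
  { reassoc. now cancel_isos. }
  rewrite hexagon. reassoc. merge_tens. now cancel_isos.
Qed.

End Coherence.

Section MarkovFacts.
Context {C : MarkovCat}.
Notation I := (@unit C).

Lemma unit_hom_eq {A : Ob C} (f g : Hom A I) : f = g.
Proof. now rewrite (unit_terminal _ _ f), (unit_terminal _ _ g). Qed.

Lemma unit_unit_hom_eq {A : Ob C} (f g : Hom A (I ⊗ I)) : f = g.
Proof.
  rewrite <- (comp_idl _ _ _ f), <- (comp_idl _ _ _ g), <- (lunit_iso2 _ I).
  reassoc. f_equal. apply unit_hom_eq.
Qed.

Lemma runit_inv_copy (X : Ob C) : runit_inv X = (idm X ⊗⊗ del X) ∘ copy X.
Proof.
  transitivity (runit_inv X ∘ (runit X ∘ (idm X ⊗⊗ del X) ∘ copy X)).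
  - now rewrite copy_counit_r, comp_idr.
  - reassoc. now cancel_isos.
Qed.

Lemma lunit_inv_copy (X : Ob C) : lunit_inv X = (del X ⊗⊗ idm X) ∘ copy X.
Proof.
  transitivity (lunit_inv X ∘ (lunit X ∘ (del X ⊗⊗ idm X) ∘ copy X)).
  - now rewrite copy_counit_l, comp_idr.
  - reassoc. now cancel_isos.
Qed.

Lemma lunit_swap (X : Ob C) : lunit X ∘ swap X I = runit X.
Proof.
  transitivity (lunit X ∘ swap X I ∘ (runit_inv X ∘ runit X)).
  { now cancel_isos. }
  rewrite runit_inv_copy. reassoc. rewrite swap_nat_k.
  rewrite_k (copy_comm C X). now rewrite_k (copy_counit_l C X).
Qed.

Lemma swap_l_unit (X : Ob C) : swap I X = runit_inv X ∘ lunit X.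
Proof.
  assert (swap_r : swap X I = lunit_inv X ∘ runit X).
  { rewrite <- lunit_swap. reassoc. now cancel_isos. }
  transitivity (swap I X ∘ (swap X I ∘ (runit_inv X ∘ lunit X))).
  - rewrite swap_r. reassoc. now cancel_isos.
  - now cancel_isos.
Qed.

Lemma lunit_inv_unit : lunit_inv I = runit_inv I.
Proof. apply unit_unit_hom_eq. Qed.

Lemma mid4_lunit_inv_k (X D Z : Ob C) (k : Hom Z _) :
  mid4 I I X D ∘ ((lunit_inv I ⊗⊗ idm (X ⊗ D)) ∘ k)
  = (lunit_inv X ⊗⊗ lunit_inv D) ∘ (lunit (X ⊗ D) ∘ k).
Proof.
  rewrite !comp_assoc. f_equal.
  unfold mid4. reassoc. rewrite lunit_inv_unit, triangle_inv. merge_tens.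
  rewrite (assoc_inv_lunit X D). reassoc. cancel_isos.
  rewrite tens_comp_fold, comp_idl, swap_l_unit. reassoc. cancel_isos.
  rewrite triangle_inv, assoc_inv_nat, assoc_inv_lunit. now merge_tens.
Qed.

Definition discard_l (A X : Ob C) : Hom (A ⊗ X) X := lunit X ∘ (del A ⊗⊗ idm X).
Definition discard_r (X K : Ob C) : Hom (X ⊗ K) X := runit X ∘ (idm X ⊗⊗ del K).

Lemma discard_l_tens_st {X Y : Ob C} (x : Hom I X) (y : Hom I Y) :
  discard_l X Y ∘ tens_st x y = y.
Proof.
  unfold discard_l, tens_st. reassoc. rewrite tens_comp_fold_k, comp_idl.
  rewrite (unit_hom_eq (del X ∘ x) (idm I)), lunit_nat_k. now cancel_isos.
Qed.

Lemma discard_r_tens_st {X Y : Ob C} (x : Hom I X) (y : Hom I Y) :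
  discard_r X Y ∘ tens_st x y = x.
Proof.
  unfold discard_r, tens_st. reassoc. rewrite tens_comp_fold_k, comp_idl.
  rewrite (unit_hom_eq (del Y ∘ y) (idm I)), runit_nat_k, lunit_inv_unit. now cancel_isos.
Qed.

Lemma mid4_copy_discard_r (B K : Ob C) :
  (idm (B ⊗ K) ⊗⊗ discard_r B K) ∘ (mid4 B B K K ∘ (idm (B ⊗ B) ⊗⊗ copy K)) = exch B B K.
Proof.
  unfold discard_r.
  transitivity ((idm (B ⊗ K) ⊗⊗ runit B)
    ∘ (((idm B ⊗⊗ idm K) ⊗⊗ (idm B ⊗⊗ del K)) ∘ (mid4 B B K K ∘ (idm (B ⊗ B) ⊗⊗ copy K)))).
  { now merge_tens. }
  rewrite <- mid4_nat_k. merge_tens. rewrite <- runit_inv_copy. unfold mid4, exch. reassoc.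
  rewrite <- (tens_id _ B B), assoc_nat. merge_tens.
  rewrite assoc_inv_runit_inv, runit_inv_nat.
  rewrite (comp_assoc _ _ _ _ _ _ _ (assoc K B I)), assoc_runit_inv.
  rewrite <- (tens_id _ B K), <- assoc_inv_nat_k. merge_tens. now cancel_isos.
Qed.

Lemma mid4_copy_discard_r_k (B K Z : Ob C) (k : Hom Z _) :
  (idm (B ⊗ K) ⊗⊗ discard_r B K) ∘ (mid4 B B K K ∘ ((idm (B ⊗ B) ⊗⊗ copy K) ∘ k))
  = exch B B K ∘ k.
Proof. rewrite <- mid4_copy_discard_r. now reassoc. Qed.

End MarkovFacts.

Section Conditionals.
Context {C : MarkovCat}.
Notation I := (@unit C).

Lemma marg2_pairing {Y Z W : Ob C} (h : Hom Y Z) (k : Hom W Y) :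
  marg2 (pairing (idm Y) h ∘ k) = h ∘ k.
Proof.
  unfold marg2, pairing. reassoc.
  rewrite tens_comp_fold_k, comp_idl, comp_idr, tens_split_r. reassoc.
  rewrite lunit_nat_k. now rewrite_k (copy_counit_l C Y).
Qed.

Lemma as_eq_comp {X Y : Ob C} {mu : Hom I X} {f g : Hom X Y} :
  as_eq mu f g -> f ∘ mu = g ∘ mu.
Proof. intro E. now rewrite <- (marg2_pairing f mu), <- (marg2_pairing g mu), E. Qed.

Lemma marg2_tens_l {W Z Z' Y : Ob C} (t : Hom Z Z') (f : Hom W (Z ⊗ Y)) :
  marg2 ((t ⊗⊗ idm Y) ∘ f) = marg2 f.
Proof.
  unfold marg2. reassoc. rewrite tens_comp_fold_k, comp_idl.
  now rewrite (unit_hom_eq (del Z' ∘ t) (del Z)).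
Qed.

Lemma is_cond2_tens_l {A Z Z' Y : Ob C} (t : Hom Z Z') {f : Hom A (Z ⊗ Y)} {g} :
  is_cond2 f g -> is_cond2 ((t ⊗⊗ idm Y) ∘ f) (t ∘ g).
Proof.
  unfold is_cond2. rewrite marg2_tens_l. intro H. rewrite H at 1.
  reassoc. now rewrite tens_comp_fold_k, comp_idl.
Qed.

Lemma is_cond2_swap {X Y : Ob C} {f : Hom I (X ⊗ Y)} {g : Hom (Y ⊗ I) X} :
  is_cond2 f g -> swap X Y ∘ f = pairing (idm Y) (g ∘ runit_inv Y) ∘ marg2 f.
Proof.
  unfold is_cond2, pairing. intro H. rewrite H at 1. reassoc.
  rewrite swap_nat_k, swap_invol_k, copy_unit, lunit_inv_unit, runit_inv_nat, runit_inv_nat_k.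
  rewrite_k (assoc_runit_inv Y Y). now merge_tens.
Qed.

Lemma is_cond2_unique {X Y : Ob C} {f : Hom I (X ⊗ Y)} {g1 g2 : Hom (Y ⊗ I) X} {w : Hom I Y} :
  is_cond2 f g1 -> is_cond2 f g2 -> abs_cont w (marg2 f) ->
  g1 ∘ runit_inv Y ∘ w = g2 ∘ runit_inv Y ∘ w.
Proof.
  intros H1 H2 Ha. apply as_eq_comp, Ha.
  unfold as_eq. now rewrite <- (is_cond2_swap H1), <- (is_cond2_swap H2).
Qed.

Lemma is_cond2_as_eq {X Y Z : Ob C} {f : Hom I (X ⊗ Y)} {g : Hom (Y ⊗ I) X}
    {h : Hom X Z} {k : Hom Y Z} :
  is_cond2 f g ->
  swap Z Y ∘ ((h ⊗⊗ idm Y) ∘ f) = pairing (idm Y) k ∘ marg2 f ->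
  as_eq (marg2 f) (h ∘ (g ∘ runit_inv Y)) k.
Proof.
  intros Hg Hk. unfold as_eq. rewrite <- Hk, swap_nat_k, (is_cond2_swap Hg).
  unfold pairing. now merge_tens.
Qed.

(* Written through its conditional, [b] feeds a copy of [o] to a channel;
   as [o] is deterministic, that copy may be replaced by a fresh draw of [o]. *)
Lemma resample_deterministic_marg2 (HC : has_conditionals C) {A X : Ob C}
    {o : Hom I X} (Ho : deterministic o) (b : Hom I (A ⊗ X)) :
  marg2 b = o -> (idm A ⊗⊗ (o ∘ del X)) ∘ b = b.
Proof.
  intro Hm. destruct (HC _ _ _ b) as [_ [c Hc]].
  unfold is_cond2 in Hc. rewrite Hm in Hc. rewrite Hc. reassoc.
  transitivity ((c ⊗⊗ idm X) ∘ ((idm (X ⊗ I) ⊗⊗ (o ∘ del X)) ∘ (swap X (X ⊗ I)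
    ∘ (assoc X X I ∘ ((copy X ⊗⊗ idm I) ∘ ((o ⊗⊗ idm I) ∘ copy I)))))).
  { now merge_tens. }
  f_equal. rewrite <- swap_nat_k. f_equal. rewrite <- (tens_id _ X I), <- assoc_nat_k. f_equal.
  merge_tens. rewrite Ho. merge_tens.
  now rewrite (unit_hom_eq (del X ∘ o) (idm I)), comp_idr.
Qed.

Lemma state_equiv_postprocess {Y : Ob C} (P : ObsHom I Y) (t : Hom Y Y) :
  (forall c, is_cond2 (obsF P) c -> abs_cont (obsO P) (marg2 (obsF P)) ->
     t ∘ (c ∘ runit_inv (obsK P) ∘ obsO P) = c ∘ runit_inv (obsK P) ∘ obsO P) ->
  state_equiv P (mkObs (obsK P) ((t ⊗⊗ idm (obsK P)) ∘ obsF P) (obsO P)).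
Proof.
  destruct P as [K f w]; cbn. intro Hfix. unfold state_equiv; cbn.
  rewrite marg2_tens_l.
  destruct (classic (abs_cont w (marg2 f))) as [Ha | Hna]; [left | right; tauto].
  do 2 (split; [exact Ha |]).
  intros c c' Hc Hc'.
  assert (Ha' : abs_cont w (marg2 ((t ⊗⊗ idm K) ∘ f))) by now rewrite marg2_tens_l.
  rewrite (is_cond2_unique Hc' (is_cond2_tens_l t Hc) Ha').
  symmetry. rewrite <- (Hfix c Hc Ha). now reassoc.
Qed.

End Conditionals.

Section CopyObservation.
Context {C : MarkovCat}.
Notation I := (@unit C).

Definition id_tens_copy (A X : Ob C) : Hom (A ⊗ X) ((A ⊗ X) ⊗ (I ⊗ X)) :=
  mid4 A I X X ∘ (runit_inv A ⊗⊗ copy X).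

Lemma discard_l_id_tens_copy (A X : Ob C) :
  discard_l (A ⊗ X) (I ⊗ X) ∘ id_tens_copy A X = del A ⊗⊗ idm X.
Proof.
  unfold discard_l, id_tens_copy. rewrite del_tensor.
  transitivity (lunit (I ⊗ X) ∘ ((lunit I ⊗⊗ idm (I ⊗ X))
    ∘ (((del A ⊗⊗ del X) ⊗⊗ (idm I ⊗⊗ idm X)) ∘ (mid4 A I X X ∘ (runit_inv A ⊗⊗ copy X))))).
  { now merge_tens. }
  rewrite <- mid4_nat_k. merge_tens. rewrite runit_inv_nat, <- lunit_inv_copy, <- lunit_inv_unit.
  replace ((lunit_inv I ∘ del A) ⊗⊗ lunit_inv X)
    with ((lunit_inv I ⊗⊗ idm (I ⊗ X)) ∘ (del A ⊗⊗ lunit_inv X)) by now merge_tens.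
  rewrite mid4_lunit_inv_k. merge_tens. cancel_isos. rewrite lunit_nat_k.
  rewrite (tens_split_r (del A) (lunit_inv X)). reassoc. rewrite lunit_nat_k. now cancel_isos.
Qed.

Lemma id_tens_copy_outputs (A X : Ob C) :
  (discard_l A X ⊗⊗ idm (I ⊗ X)) ∘ id_tens_copy A X
  = swap (I ⊗ X) X ∘ ((lunit_inv X ⊗⊗ idm X) ∘ (copy X ∘ discard_l A X)).
Proof.
  unfold discard_l, id_tens_copy.
  transitivity ((lunit X ⊗⊗ idm (I ⊗ X)) ∘ (((del A ⊗⊗ idm X) ⊗⊗ (idm I ⊗⊗ idm X))
    ∘ (mid4 A I X X ∘ (runit_inv A ⊗⊗ copy X)))).
  { now merge_tens. }
  rewrite <- mid4_nat_k. merge_tens. rewrite runit_inv_nat, <- lunit_inv_unit.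
  replace ((lunit_inv I ∘ del A) ⊗⊗ copy X)
    with ((lunit_inv I ⊗⊗ idm (X ⊗ X)) ∘ ((idm I ⊗⊗ copy X) ∘ (del A ⊗⊗ idm X)))
    by now merge_tens.
  rewrite mid4_lunit_inv_k, lunit_nat_k. merge_tens. cancel_isos.
  rewrite swap_nat_k. now rewrite_k (copy_comm C X).
Qed.

Lemma copy_unit_tens (A X : Ob C) :
  (idm (I ⊗ X) ⊗⊗ discard_l I X) ∘ (copy (I ⊗ X) ∘ (del A ⊗⊗ idm X))
  = (lunit_inv X ⊗⊗ idm X) ∘ (copy X ∘ discard_l A X).
Proof.
  unfold discard_l. rewrite copy_tensor, copy_unit, del_unit, tens_id, comp_idr. merge_tens.
  replace ((lunit_inv I ∘ del A) ⊗⊗ copy X)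
    with ((lunit_inv I ⊗⊗ idm (X ⊗ X)) ∘ ((idm I ⊗⊗ copy X) ∘ (del A ⊗⊗ idm X)))
    by now merge_tens.
  rewrite mid4_lunit_inv_k, lunit_nat_k. merge_tens. now cancel_isos.
Qed.

Lemma discard_l_assoc_k (Y B K Z : Ob C) (k : Hom Z _) :
  discard_l Y (B ⊗ K) ∘ (assoc Y B K ∘ k) = (discard_l Y B ⊗⊗ idm K) ∘ k.
Proof.
  unfold discard_l. rewrite !comp_assoc. f_equal.
  rewrite <- tens_id, <- comp_assoc, <- assoc_nat, comp_assoc, lunit_tens, tens_comp_fold, comp_idl.
  reflexivity.
Qed.

Definition copy_branch (A X K : Ob C) : Hom ((A ⊗ X) ⊗ K) ((A ⊗ X) ⊗ ((I ⊗ X) ⊗ K)) :=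
  assoc (A ⊗ X) (I ⊗ X) K ∘ (id_tens_copy A X ⊗⊗ idm K).

Lemma copy_branch_output (A X K : Ob C) :
  swap X ((I ⊗ X) ⊗ K) ∘ ((discard_l A X ⊗⊗ idm ((I ⊗ X) ⊗ K)) ∘ copy_branch A X K)
  = pairing (idm ((I ⊗ X) ⊗ K)) (discard_l I X ∘ discard_r (I ⊗ X) K)
    ∘ (discard_l (A ⊗ X) ((I ⊗ X) ⊗ K) ∘ copy_branch A X K).
Proof.
  unfold copy_branch.
  transitivity (exch (I ⊗ X) X K
                  ∘ (((lunit_inv X ⊗⊗ idm X) ∘ (copy X ∘ discard_l A X)) ⊗⊗ idm K)).
  - rewrite <- (tens_id _ (I ⊗ X) K), <- assoc_nat_k, tens_comp_fold, comp_idl.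
    rewrite id_tens_copy_outputs, <- (comp_idl _ _ _ (idm K)), <- tens_comp_fold.
    now rewrite hexagon_exch, comp_idl.
  - rewrite discard_l_assoc_k, tens_comp_fold, comp_idl, discard_l_id_tens_copy.
    unfold pairing. rewrite (copy_tensor C (I ⊗ X) K).
    replace (idm ((I ⊗ X) ⊗ K) ⊗⊗ (discard_l I X ∘ discard_r (I ⊗ X) K))
      with ((idm ((I ⊗ X) ⊗ K) ⊗⊗ discard_l I X) ∘ (idm ((I ⊗ X) ⊗ K) ⊗⊗ discard_r (I ⊗ X) K))
      by now merge_tens.
    reassoc.
    replace ((copy (I ⊗ X) ⊗⊗ copy K) ∘ ((del A ⊗⊗ idm X) ⊗⊗ idm K))
      with ((idm ((I ⊗ X) ⊗ (I ⊗ X)) ⊗⊗ copy K) ∘ ((copy (I ⊗ X) ∘ (del A ⊗⊗ idm X)) ⊗⊗ idm K))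
      by now merge_tens.
    rewrite mid4_copy_discard_r_k. rewrite exch_nat. merge_tens.
    now rewrite copy_unit_tens.
Qed.

Lemma copy_branch_output_state (A X K : Ob C) (psi : Hom I ((A ⊗ X) ⊗ K)) :
  swap X ((I ⊗ X) ⊗ K) ∘ ((discard_l A X ⊗⊗ idm ((I ⊗ X) ⊗ K)) ∘ (copy_branch A X K ∘ psi))
  = pairing (idm ((I ⊗ X) ⊗ K)) (discard_l I X ∘ discard_r (I ⊗ X) K)
    ∘ marg2 (copy_branch A X K ∘ psi).
Proof.
  change (marg2 (copy_branch A X K ∘ psi))
    with (discard_l (A ⊗ X) ((I ⊗ X) ⊗ K) ∘ (copy_branch A X K ∘ psi)).
  pose proof (comp_eq_precomp _ _ (copy_branch_output A X K) _ psi) as E.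
  rewrite <- !comp_assoc in E. exact E.
Qed.

Lemma id_tens_copy_resample (A X : Ob C) (o : Hom I X) :
  ((idm A ⊗⊗ (o ∘ del X)) ⊗⊗ idm (I ⊗ X)) ∘ id_tens_copy A X
  = mid4 A I X X ∘ (runit_inv A ⊗⊗ ((o ⊗⊗ idm X) ∘ lunit_inv X)).
Proof.
  unfold id_tens_copy. rewrite <- (tens_id _ I X), <- mid4_nat_k, lunit_inv_copy.
  now merge_tens.
Qed.

Lemma obs_tens_id_resample (A X : Ob C) (o : Hom I X) (Psi : ObsHom I (A ⊗ X)) :
  let P := obs_comp (obs_tens (obs_id A) (mkObs X (copy X) o)) Psi in
  obs_comp (obs_tens (obs_id A) (mkObs X ((o ⊗⊗ idm X) ∘ lunit_inv X) o)) Psi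
  = mkObs (obsK P) (((idm A ⊗⊗ (o ∘ del X)) ⊗⊗ idm (obsK P)) ∘ obsF P) (obsO P).
Proof.
  destruct Psi as [K psi oK]. unfold obs_comp, obs_tens, obs_id; cbn. f_equal.
  rewrite <- id_tens_copy_resample. unfold id_tens_copy.
  rewrite <- (tens_id _ (I ⊗ X) K). reassoc. rewrite <- assoc_nat_k. now merge_tens.
Qed.

Lemma obs_tens_id_copy_posterior_marg2 (A X : Ob C) (o : Hom I X) (Psi : ObsHom I (A ⊗ X)) :
  let P := obs_comp (obs_tens (obs_id A) (mkObs X (copy X) o)) Psi in
  forall c, is_cond2 (obsF P) c -> abs_cont (obsO P) (marg2 (obsF P)) ->
  marg2 (c ∘ runit_inv (obsK P) ∘ obsO P) = o.
Proof.
  destruct Psi as [K psi oK]. cbn. intros c Hc Ha.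
  pose proof (as_eq_comp (Ha _ _ _ (is_cond2_as_eq Hc (copy_branch_output_state A X K psi))))
    as Hpost.
  change (marg2 ?b) with (discard_l A X ∘ b).
  now rewrite comp_assoc, Hpost, <- comp_assoc, discard_r_tens_st, discard_l_tens_st.
Qed.

End CopyObservation.

Theorem proposition5p14 (C : MarkovCat) (HC : has_conditionals C)
    (HP : precise_supports C) (X : Ob C) (o : Hom unit X)
    (Ho : deterministic o) :
  obs_equiv (mkObs X (copy X) o)
            (mkObs X ((o ⊗⊗ idm X) ∘ lunit_inv X) o).
Proof.
  intros A Psi _.
  rewrite obs_tens_id_resample.
  apply state_equiv_postprocess. intros c Hc Ha.
  apply (resample_deterministic_marg2 HC Ho).
  now apply obs_tens_id_copy_posterior_marg2.
Qed.
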